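(* The Euler–Mascheroni constant $\gamma$ satisfies $$\gamma=1-\frac12\ln 2-\sum_{n=2}^{\infty}\left(\operatorname{arctanh}\!\left(\frac1n\right)-\frac1n\right).$$
   Context: $\gamma=\lim_{N\to\infty}\left(\sum_{n=1}^N\frac1n-\ln N\right)$ is the Euler–Mascheroni constant. *)

From Stdlib Require Import Reals.
From Coquelicot Require Import Coquelicot.
Open Scope R_scope.

Definition arctanh (x : R) : R := / 2 * ln ((1 + x) / (1 - x)).

Definition harmonic (N : nat) : R := sum_n_m (fun n => / INR n) 1 N.

(* The sequence H_N - ln N whose limit is the Euler-Mascheroni constant. *)
Definition gamma_seq (N : nat) : R := harmonic N - ln (INR N).

(* Since arctanh (1/n) = (ln (n+1) - ln (n-1)) / 2, the n-th term of the series
   is the difference of consecutive values of c_n = H_n - (ln (n+1) + ln n) / 2,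
   which differs from H_n - ln n by (ln (n+1) - ln n) / 2 -> 0.  The series
   converges by comparison with the telescoping series of 1/(n-1) - 1/n, since
   ln (a/b) lies between (a-b)/a and (a-b)/b; its sum is therefore
   c_1 - lim c_n = 1 - ln 2 / 2 - gamma. *)
From Stdlib Require Import Reals Lra Lia.
From Coquelicot Require Import Coquelicot.
Open Scope R_scope.

Lemma ln_le_sub_1 (x : R) : 0 < x -> ln x <= x - 1.
Proof.
  intros Hx. pose proof (exp_ineq1_le (ln x)) as H. rewrite exp_ln in H; lra.
Qed.

Lemma ln_sub_ln_le (a b : R) : 0 < a -> 0 < b -> ln a - ln b <= (a - b) / b.
Proof.
  intros Ha Hb. rewrite <- ln_div by assumption.
  replace ((a - b) / b) with (a / b - 1) by (field; lra).
  apply ln_le_sub_1, Rdiv_lt_0_compat; assumption.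
Qed.

Lemma ln_sub_ln_ge (a b : R) : 0 < a -> 0 < b -> (a - b) / a <= ln a - ln b.
Proof.
  intros Ha Hb. pose proof (ln_sub_ln_le b a Hb Ha) as H.
  replace ((a - b) / a) with (- ((b - a) / a)) by (field; lra). lra.
Qed.

Lemma arctanh_inv (x : R) : 1 < x -> arctanh (/ x) = / 2 * (ln (x + 1) - ln (x - 1)).
Proof.
  intros Hx. unfold arctanh. rewrite <- ln_div by lra.
  do 2 f_equal. field. lra.
Qed.

Lemma arctanh_inv_sub_inv_bound (x : R) :
  1 < x -> Rabs (arctanh (/ x) - / x) <= / (x - 1) - / x.
Proof.
  intros Hx. rewrite arctanh_inv by assumption.
  pose proof (ln_sub_ln_le (x + 1) (x - 1) ltac:(lra) ltac:(lra)) as Hup.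
  pose proof (ln_sub_ln_ge (x + 1) (x - 1) ltac:(lra) ltac:(lra)) as Hlow.
  replace ((x + 1 - (x - 1)) / (x - 1)) with (2 * / (x - 1)) in Hup by (field; lra).
  replace ((x + 1 - (x - 1)) / (x + 1)) with (2 * / (x + 1)) in Hlow by (field; lra).
  (* the lower bound 1/(x+1) - 1/x is the smaller in size, by convexity of 1/x *)
  assert (Hconvex : / x - / (x + 1) <= / (x - 1) - / x).
  { assert (Hgap : / (x - 1) - / x - (/ x - / (x + 1)) = 2 / (x * (x - 1) * (x + 1)))
      by (field; lra).
    assert (0 < 2 / (x * (x - 1) * (x + 1))).
    { apply Rdiv_lt_0_compat; [lra |]. repeat apply Rmult_lt_0_compat; lra. }
    lra. }
  apply Rabs_le. lra.
Qed.

Lemma sum_n_telescope (u : nat -> R) (N : nat) :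
  sum_n (fun k => u k - u (S k)) N = u O - u (S N).
Proof.
  induction N as [| N IH].
  - now rewrite sum_O.
  - rewrite sum_Sn, IH. change plus with Rplus. lra.
Qed.

Lemma is_series_telescope (u : nat -> R) (l : R) :
  is_lim_seq u l -> is_series (fun k => u k - u (S k)) (u O - l).
Proof.
  intros Hu. unfold is_series.
  change (is_lim_seq (sum_n (fun k => u k - u (S k))) (u O - l)).
  apply is_lim_seq_ext with (fun N => u O - u (S N)).
  - intros N. now rewrite sum_n_telescope.
  - apply (is_lim_seq_minus' _ _ (u O) l); [apply is_lim_seq_const |].
    now apply (is_lim_seq_incr_1 u l).
Qed.

Lemma is_lim_seq_telescope (u : nat -> R) (s : R) :
  is_series (fun k => u k - u (S k)) s -> is_lim_seq u (u O - s).
Proof.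
  intros Hs. apply is_lim_seq_incr_1.
  apply is_lim_seq_ext with (fun N => u O - sum_n (fun k => u k - u (S k)) N).
  - intros N. rewrite sum_n_telescope. ring.
  - apply (is_lim_seq_minus' _ _ (u O) s); [apply is_lim_seq_const | exact Hs].
Qed.

Lemma is_lim_seq_inv_INR : is_lim_seq (fun n => / INR n) 0.
Proof.
  replace (Finite 0) with (Rbar_inv p_infty) by reflexivity.
  apply is_lim_seq_inv; [apply is_lim_seq_INR | discriminate].
Qed.

Lemma is_lim_seq_ln_succ_sub_ln : is_lim_seq (fun n => ln (INR n + 1) - ln (INR n)) 0.
Proof.
  apply is_lim_seq_le_le_loc with (u := fun _ => 0) (w := fun n => / INR n).
  - exists 1%nat. intros n Hn.
    assert (Hpos : 0 < INR n) by (apply lt_0_INR; lia).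
    pose proof (ln_sub_ln_le (INR n + 1) (INR n) ltac:(lra) Hpos) as Hup.
    pose proof (ln_sub_ln_ge (INR n + 1) (INR n) ltac:(lra) Hpos) as Hlow.
    replace (INR n + 1 - INR n) with 1 in Hup, Hlow by ring.
    assert (0 < 1 / (INR n + 1)) by (apply Rdiv_lt_0_compat; lra).
    unfold Rdiv in Hup. lra.
  - apply is_lim_seq_const.
  - exact is_lim_seq_inv_INR.
Qed.

Definition gamma_mid (n : nat) : R :=
  harmonic n - / 2 * (ln (INR n + 1) + ln (INR n)).

Lemma gamma_mid_1 : gamma_mid 1 = 1 - / 2 * ln 2.
Proof.
  unfold gamma_mid, harmonic. rewrite sum_n_n. simpl.
  replace (1 + 1) with 2 by ring. rewrite ln_1. field.
Qed.

Lemma gamma_seq_gamma_mid (n : nat) :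
  gamma_seq n = gamma_mid n + / 2 * (ln (INR n + 1) - ln (INR n)).
Proof. unfold gamma_seq, gamma_mid. field. Qed.

Lemma INR_add_2 (k : nat) : INR (k + 2) = INR (S k) + 1.
Proof. rewrite <- S_INR. f_equal. lia. Qed.

Lemma arctanh_term_telescope (k : nat) :
  arctanh (/ INR (k + 2)) - / INR (k + 2) = gamma_mid (S k) - gamma_mid (S (S k)).
Proof.
  assert (HSk : 0 < INR (S k)) by (apply lt_0_INR; lia).
  rewrite INR_add_2, arctanh_inv by lra.
  replace (INR (S k) + 1 - 1) with (INR (S k)) by ring.
  unfold gamma_mid, harmonic.
  rewrite (sum_n_Sm _ 1 (S k)) by lia. change plus with Rplus.
  rewrite (S_INR (S k)). field. lra.
Qed.

Lemma ex_series_arctanh_term :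
  ex_series (fun k : nat => arctanh (/ INR (k + 2)) - / INR (k + 2)).
Proof.
  apply (@ex_series_le R_AbsRing R_CompleteNormedModule _
           (fun k => / INR (S k) - / INR (S (S k)))).
  - intros k.
    assert (HSk : 0 < INR (S k)) by (apply lt_0_INR; lia).
    replace (INR (S (S k))) with (INR (k + 2)) by (f_equal; lia).
    replace (INR (S k)) with (INR (k + 2) - 1) by (rewrite INR_add_2; ring).
    apply arctanh_inv_sub_inv_bound. rewrite INR_add_2. lra.
  - exists (/ INR 1 - 0).
    apply (is_series_telescope (fun k => / INR (S k))).
    exact (proj1 (is_lim_seq_incr_1 _ _) is_lim_seq_inv_INR).
Qed.

Theorem corollary1p3 :
  exists S : R,
    is_series (fun k : nat => arctanh (/ INR (k + 2)) - / INR (k + 2)) S /\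
    is_lim_seq gamma_seq (1 - / 2 * ln 2 - S).
Proof.
  destruct ex_series_arctanh_term as [s Hs].
  exists s. split; [exact Hs |].
  assert (Hmid : is_lim_seq (fun k => gamma_mid (S k)) (gamma_mid 1 - s)).
  { apply is_lim_seq_telescope.
    apply (is_series_ext _ _ _ arctanh_term_telescope Hs). }
  rewrite <- gamma_mid_1, <- (Rplus_0_r (gamma_mid 1 - s)).
  apply is_lim_seq_incr_1.
  apply is_lim_seq_ext with
    (fun k => gamma_mid (S k) + / 2 * (ln (INR (S k) + 1) - ln (INR (S k)))).
  - intros k. now rewrite gamma_seq_gamma_mid.
  - apply (is_lim_seq_plus' _ _ (gamma_mid 1 - s) 0); [exact Hmid |].
    pose proof (is_lim_seq_scal_l _ (/ 2) _
                  (proj1 (is_lim_seq_incr_1 _ _) is_lim_seq_ln_succ_sub_ln)) as Hhalf.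
    simpl in Hhalf. now rewrite Rmult_0_r in Hhalf.
Qed.
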